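(* Let $\mathcal{E}=(E,\leq,\sharp)$ be a prime event structure and let $e,e'\in E$ be concurrent, $e\,||\,e'$. Then there exists a configuration $C$ of $\mathcal{E}$ and processes $P_1,P_2,P_3,P_4$ such that $\emptyset\triangleright\textsc{espsi}(\mathcal{E},C)\xrightarrow{\overline{e}e}P_1$, $\emptyset\triangleright P_1\xrightarrow{\overline{e'}e'}P_2$, $\emptyset\triangleright\textsc{espsi}(\mathcal{E},C)\xrightarrow{\overline{e'}e'}P_3$, $\emptyset\triangleright P_3\xrightarrow{\overline{e}e}P_4$, and $P_2=P_4$.
   Context: A prime event structure is a triple $\mathcal{E}=(E,\leq,\sharp)$ where $E$ is a set of events (names from a nominal set), $\leq$ is a partial order on $E$ with $\{d\mid d\leq e\}$ finite for every $e$, and $\sharp$ is an irreflexive symmetric relation on $E$ with conflict heredity ($d\leq e$ and $d\sharp f$ imply $e\sharp f$). Two events are concurrent, $d\,||\,e$, iff none of $d\leq e$, $e\leq d$, $d\sharp e$ holds. A configuration is a finite, conflict-free, downward-closed subset of $E$. Psi-calculus fragment. Processes: assertion processes $(\!|\Psi|\!)$, output prefixes $\overline{M}\langle N\rangle.P$, case processes $\mathbf{case}\ \varphi_1:P_1,\dots,\varphi_n:P_n$, and parallel compositions (also of infinite families). Frames: $\mathcal{F}((\!|\Psi|\!))=\Psi$, $\mathcal{F}(P\mid Q)=\mathcal{F}(P)\otimes\mathcal{F}(Q)$ (composition over all components for families), and the frame of prefixed and case processes is the unit $\mathbf{1}$. Transitions $\Psi\triangleright P\xrightarrow{\alpha}P'$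 are generated by: (Out) if $\Psi\vdash M\leftrightarrow K$ then $\Psi\triangleright\overline{M}\langle N\rangle.P\xrightarrow{\overline{K}N}P$; (Case) if $\Psi\triangleright P_i\xrightarrow{\alpha}P'$ and $\Psi\vdash\varphi_i$ then $\Psi\triangleright\mathbf{case}\ \tilde\varphi:\tilde P\xrightarrow{\alpha}P'$; (Par) if $\Psi\otimes\mathcal{F}(Q)\triangleright P\xrightarrow{\alpha}P'$ then $\Psi\triangleright P\mid Q\xrightarrow{\alpha}P'\mid Q$, symmetrically for $Q$, and for a parallel family one component moves in context $\Psi$ composed with the frames of all other components, the others remaining unchanged. Assertion processes have no transitions. Event-psi instance over $E$: terms are elements of $E$; conditions are pairs $(L,R)$ of subsets of $E$; assertions are subsets of $E$; $\otimes=\cup$; $\mathbf{1}=\emptyset$; entailment: $\Psi\vdash(L,R)$ iff $L\subseteq\Psi$ and $\Psi\cap R=\emptyset$, and $\Psi\vdash a\leftrightarrow b$ iff $a=b$. Translation: $\textsc{espsi}(\mathcal{E},C)=\big|_{e\in E}P_e$ where $P_e=(\!|\{e\}|\!)$ if $e\in C$ and otherwise $P_e=\mathbf{case}\ \varphi_e:\overline{e}\langle e\rangle.(\!|\{e\}|\!)$, with $\varphi_e=(\{d\in E\mid d\leq e,\ d\neq e\},\{d\in E\mid d\sharp e\})$. Processes are compared as $E$-indexed parallel families. The paper writes the transition labelled $\overline{e}e$ simply as $\xrightarrow{e}$. *)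

From Stdlib Require Import List ClassicalEpsilon.
Import ListNotations.
Set Implicit Arguments.

Record pes (E : Type) := Pes {
  le : E -> E -> Prop;
  cf : E -> E -> Prop;
  le_refl : forall e, le e e;
  le_trans : forall d e f, le d e -> le e f -> le d f;
  le_antisym : forall d e, le d e -> le e d -> d = e;
  le_fin : forall e, exists l : list E, forall d, le d e -> In d l;
  cf_irrefl : forall e, ~ cf e e;
  cf_sym : forall d e, cf d e -> cf e d;
  cf_hered : forall d e f, le d e -> cf d f -> cf e f
}.

Definition concurrent E (S : pes E) (d e : E) : Prop :=
  ~ le S d e /\ ~ le S e d /\ ~ cf S d e.

Definition configuration E (S : pes E) (C : E -> Prop) : Prop :=
  (exists l : list E, forall x, C x -> In x l) /\
  (forall d e, C d -> C e -> ~ cf S d e) /\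
  (forall d e, le S d e -> C e -> C d).

(* assertions: subsets of E; conditions: pairs (L,R); terms: elements of E *)
Definition assertion E := E -> Prop.
Definition condition E := (assertion E * assertion E)%type.

Definition unit_assn E : assertion E := fun _ => False.
Definition comp_assn E (A B : assertion E) : assertion E := fun x => A x \/ B x.

Definition entails E (Psi : assertion E) (phi : condition E) : Prop :=
  (forall x, fst phi x -> Psi x) /\ (forall x, Psi x -> snd phi x -> False).

Inductive proc (E : Type) : Type :=
| PAssert : assertion E -> proc E
| POut : E -> E -> proc E -> proc E
| PCase : list (condition E * proc E) -> proc E
| PPar : proc E -> proc E -> proc E
| PFam : (E -> proc E) -> proc E.                 (* E-indexed parallel family *)

Fixpoint frame E (P : proc E) : assertion E :=
  match P with
  | PAssert Psi => Psi
  | POut _ _ _ => @unit_assn E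
  | PCase _ => @unit_assn E
  | PPar P Q => comp_assn (frame P) (frame Q)
  | PFam F => fun x => exists y, frame (F y) x
  end.

Definition frame_others E (F : E -> proc E) (i : E) : assertion E :=
  fun x => exists y, y <> i /\ frame (F y) x.

Definition update E (F : E -> proc E) (i : E) (P : proc E) : E -> proc E :=
  fun y => match excluded_middle_informative (y = i) with
           | left _ => P
           | right _ => F y
           end.

(* labels: output labels  out K N, represented as the pair (K, N) *)
Definition label E := (E * E)%type.

Inductive trans E : assertion E -> proc E -> label E -> proc E -> Prop :=
| tr_out : forall Psi M K N P, M = K ->       (* Psi |- M <-> K  iff  M = K *)
    trans Psi (POut M N P) (K, N) P
| tr_case : forall Psi cs phi Pi a P',
    In (phi, Pi) cs -> trans Psi Pi a P' -> entails Psi phi ->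
    trans Psi (PCase cs) a P'
| tr_parL : forall Psi P Q a P',
    trans (comp_assn Psi (frame Q)) P a P' -> trans Psi (PPar P Q) a (PPar P' Q)
| tr_parR : forall Psi P Q a Q',
    trans (comp_assn Psi (frame P)) Q a Q' -> trans Psi (PPar P Q) a (PPar P Q')
| tr_fam : forall Psi F i a P',
    trans (comp_assn Psi (frame_others F i)) (F i) a P' ->
    trans Psi (PFam F) a (PFam (update F i P')).

Definition phi_e E (S : pes E) (e : E) : condition E :=
  (fun d => le S d e /\ d <> e, fun d => cf S d e).

Definition P_e E (S : pes E) (C : E -> Prop) (e : E) : proc E :=
  match excluded_middle_informative (C e) with
  | left _ => PAssert (fun d => d = e)
  | right _ => PCase [(phi_e S e, POut e e (PAssert (fun d => d = e)))]
  end.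

Definition espsi E (S : pes E) (C : E -> Prop) : proc E := PFam (P_e S C).

(* Take for C the union of the strict pasts of e and e'.  Firing an event e
   that is enabled at a configuration C (its strict past lies in C and nothing
   in C conflicts with it) leads from espsi(E, C) to espsi(E, C ∪ {e}):
   the frames of the other components are exactly C, which entails the guard
   of e.  Concurrency of e and e' makes each of them enabled both at C and
   after the other has fired, and both interleavings end in
   espsi(E, C ∪ {e, e'}). *)
From Stdlib Require Import List ClassicalEpsilon FunctionalExtensionality.
Import ListNotations.
Set Implicit Arguments.
Unset Strict Implicit.

Section EventPsi.

Variables (E : Type) (S : pes E).

Definition add_event (C : E -> Prop) (e : E) : E -> Prop :=
  fun x => C x \/ x = e.

Definition enabled (C : E -> Prop) (e : E) : Prop :=
  (forall d, le S d e -> d <> e -> C d) /\ (forall d, C d -> ~ cf S d e).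

Lemma frame_P_e C y x : frame (P_e S C y) x <-> C y /\ x = y.
Proof.
  unfold P_e; destruct (excluded_middle_informative (C y)); simpl;
    unfold unit_assn; tauto.
Qed.

Lemma P_e_notin C e : ~ C e ->
  P_e S C e = PCase [(phi_e S e, POut e e (PAssert (fun d => d = e)))].
Proof. unfold P_e; destruct (excluded_middle_informative (C e)); tauto. Qed.

Lemma P_e_ext C D : (forall x, C x <-> D x) -> P_e S C = P_e S D.
Proof.
  intros CD; apply functional_extensionality; intro y; unfold P_e.
  destruct (excluded_middle_informative (C y)),
           (excluded_middle_informative (D y)); firstorder.
Qed.

Lemma espsi_ext C D : (forall x, C x <-> D x) -> espsi S C = espsi S D.
Proof. intros CD; unfold espsi; f_equal; exact (P_e_ext CD). Qed.

Lemma update_P_e C e :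
  update (P_e S C) e (PAssert (fun d => d = e)) = P_e S (add_event C e).
Proof.
  apply functional_extensionality; intro y; unfold update, P_e, add_event.
  destruct (excluded_middle_informative (y = e)),
           (excluded_middle_informative (C y \/ y = e)),
           (excluded_middle_informative (C y)); subst; tauto.
Qed.

Lemma espsi_fire C e : ~ C e -> enabled C e ->
  trans (@unit_assn E) (espsi S C) (e, e) (espsi S (add_event C e)).
Proof.
  intros Ce [past_in no_cf]; unfold espsi; rewrite <- update_P_e.
  apply tr_fam; rewrite (P_e_notin Ce).
  eapply tr_case; [left; reflexivity | apply tr_out; reflexivity |].
  split; simpl.
  - intros d [de ne]; right; exists d; split; [exact ne |].
    apply frame_P_e; auto.
  - intros x [[] | [y [_ fy]]]; apply frame_P_e in fy as [Cy ->].
    exact (no_cf y Cy).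
Qed.

Lemma cf_of_past a b d f : le S d a -> le S f b -> cf S d f -> cf S a b.
Proof.
  intros da fb df; apply (cf_hered S _ _ _ da), cf_sym,
    (cf_hered S _ _ _ fb), cf_sym, df.
Qed.

Lemma concurrent_sym e e' : concurrent S e e' -> concurrent S e' e.
Proof.
  intros [ee' [e'e cfe]]; repeat split; auto.
  intro c; exact (cfe (cf_sym S _ _ c)).
Qed.

Definition strict_pasts (e e' : E) : E -> Prop :=
  fun x => (le S x e /\ x <> e) \/ (le S x e' /\ x <> e').

Section Concurrent.

Variables e e' : E.
Hypothesis ee' : concurrent S e e'.

Lemma concurrent_neq : e <> e'.
Proof. intros <-; destruct ee' as [nle _]; exact (nle (le_refl S e)). Qed.

Lemma strict_pasts_configuration : configuration S (strict_pasts e e').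
Proof.
  destruct ee' as [_ [_ ncf]]; split; [| split].
  - destruct (le_fin S e) as [l fl], (le_fin S e') as [l' fl'].
    exists (l ++ l'); intros x [[xe _] | [xe _]]; apply in_or_app; auto.
  - intros d f [[da _] | [da _]] [[fb _] | [fb _]] df;
      pose proof (cf_of_past da fb df) as c;
      solve [exact (cf_irrefl S _ c) | exact (ncf c) | exact (ncf (cf_sym S _ _ c))].
  - intros d f df [[fe ne] | [fe ne]]; [left | right];
      (split; [eapply le_trans; eassumption |]);
      intros ->; apply ne, (le_antisym S); assumption.
Qed.

Lemma strict_pasts_notin : ~ strict_pasts e e' e.
Proof.
  destruct ee' as [nle _]; intros [[_ ne] | [le' _]]; auto.
Qed.

Lemma strict_pasts_no_cf d : strict_pasts e e' d -> ~ cf S d e.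
Proof.
  destruct ee' as [_ [_ ncf]].
  intros [[de _] | [de' _]] c.
  - exact (cf_irrefl S _ (cf_of_past (le_refl S e) de (cf_sym S _ _ c))).
  - exact (ncf (cf_of_past (le_refl S e) de' (cf_sym S _ _ c))).
Qed.

Lemma strict_pasts_enabled : enabled (strict_pasts e e') e.
Proof.
  split; [intros d de ne; left; auto | exact strict_pasts_no_cf].
Qed.

Lemma strict_pasts_notin_after : ~ add_event (strict_pasts e e') e e'.
Proof.
  intros [C' | e'e]; [| exact (concurrent_neq (eq_sym e'e))].
  destruct ee' as [_ [nle' _]]; destruct C' as [[le' _] | [_ ne]]; auto.
Qed.

End Concurrent.

Lemma strict_pasts_comm e e' x : strict_pasts e e' x <-> strict_pasts e' e x.
Proof. unfold strict_pasts; tauto. Qed.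

Lemma strict_pasts_enabled_after e e' : concurrent S e e' ->
  enabled (add_event (strict_pasts e e') e) e'.
Proof.
  intros ee'; split.
  - intros d de' ne; left; right; auto.
  - intros d [Cd | ->]; [| apply ee'].
    apply (strict_pasts_no_cf (concurrent_sym ee')), strict_pasts_comm, Cd.
Qed.

Lemma strict_pasts_interleaving e e' : concurrent S e e' ->
  let C := strict_pasts e e' in
  trans (@unit_assn E) (espsi S C) (e, e) (espsi S (add_event C e)) /\
  trans (@unit_assn E) (espsi S (add_event C e)) (e', e')
        (espsi S (add_event (add_event C e) e')).
Proof.
  intros ee'; split; apply espsi_fire.
  - exact (strict_pasts_notin ee').
  - exact (strict_pasts_enabled ee').
  - exact (strict_pasts_notin_after ee').
  - exact (strict_pasts_enabled_after ee').
Qed.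

End EventPsi.

Theorem mainTheorem3 (E : Type) (S : pes E) (e e' : E) :
  concurrent S e e' ->
  exists C : E -> Prop, configuration S C /\
  exists P1 P2 P3 P4 : proc E,
    trans (@unit_assn E) (espsi S C) (e, e) P1 /\
    trans (@unit_assn E) P1 (e', e') P2 /\
    trans (@unit_assn E) (espsi S C) (e', e') P3 /\
    trans (@unit_assn E) P3 (e, e) P4 /\
    P2 = P4.
Proof.
  intros ee'.
  destruct (strict_pasts_interleaving ee') as [fire_e fire_e'].
  destruct (strict_pasts_interleaving (concurrent_sym ee')) as [fire_e'_first fire_e_second].
  rewrite (espsi_ext S (strict_pasts_comm S e' e)) in fire_e'_first.
  exists (strict_pasts S e e'); split; [exact (strict_pasts_configuration ee') |].
  exists (espsi S (add_event (strict_pasts S e e') e)),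
         (espsi S (add_event (add_event (strict_pasts S e e') e) e')),
         (espsi S (add_event (strict_pasts S e' e) e')),
         (espsi S (add_event (add_event (strict_pasts S e' e) e') e)).
  repeat split; try assumption.
  apply espsi_ext; unfold add_event, strict_pasts; tauto.
Qed.
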